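(* Let $\mathcal{F}$ be a hypothesis class of functions $\mathcal{X}\to\{\pm1\}$ with finite VC dimension $d$, and $\mathcal{P}$ an unknown distribution on $\mathcal{X}\times\{\pm1\}$. Consider a run of Active-ILESS with accuracy parameter $\epsilon>0$ and confidence $\delta$, suppose the event $\mathcal{K}$ occurred, and suppose the run terminated because of the $\epsilon$ condition. Then the returned hypothesis $\hat f$ satisfies $R_{\mathcal{P}}(\hat f)\le R_{\mathcal{P}}(f^* )+\epsilon$, where $f^*$ is a true risk minimizer of $\mathcal{P}$.
   Context: $R_{\mathcal{P}}(f)=\Pr_{\mathcal{P}}[f(X)\ne Y]$; $\hat R(f,S)$ is the fraction of examples of $S$ misclassified by $f$; $f^*$ is any minimizer of $R_{\mathcal P}$ over $\mathcal{F}$. Slacks: for $n>0$, $\delta'\in(0,1)$, $A=4d\ln\frac{16ne}{d\delta'}$, $\hat\sigma_{R-\hat R}(n,\delta',d,\hat r)=\frac{A}{n}+\sqrt{\frac{A}{n}\hat r}$, $\bar\sigma_{R-\hat R}(n,\delta',d,r)=\sqrt{\frac{A}{n}r}$, $\bar\sigma_{\hat R-R}(n,\delta',d,r)=\frac{A}{n}+\sqrt{\frac{A}{n}r}$, $\hat\sigma_{\hat R-R}(n,\delta',d,\hat r)=\sqrt{\frac{A}{n}\hat r}$, $\sigma_{R-\hat R}=\min\{\hat\sigma_{R-\hat R}(\cdot,\hat r),\bar\sigma_{R-\hat R}(\cdot,r)\}$, $\sigma_{\hat R-R}=\min\{\bar\sigma_{\hat R-R}(\cdot,r),\hat\sigma_{\hat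 R-R}(\cdot,\hat r)\}$. $AGR(G)=\{x:\text{all }f\in G\text{ agree on }x\}$. Active-ILESS (inputs: $\epsilon$ and/or budget $m$, confidence $\delta$, $\mathcal{F}$, $d$, i.i.d. stream $x_1,x_2,\dots$ from $\mathcal{P}$): initialize $\hat S=\emptyset$, $G_0=\mathcal{F}$, $t=1$; for each $x_t$: if $x_t\in AGR(G_{t-1})$ do not request its label and set $y_t=f(x_t)$ for any $f\in G_{t-1}$, otherwise request the true label $y_t$; add $(x_t,y_t)$ to $\hat S$; let $\hat f$ be an ERM on $\hat S$; if $\log_2t\in\mathbb{N}$: set $\sigma_{\rm Active}=\hat\sigma_{R-\hat R}(\tfrac t2,\tfrac\delta{2t},d,\hat R(\hat f,\hat S))+\bar\sigma_{\hat R-R}\big(\tfrac t2,\tfrac\delta{2t},d,\hat R(\hat f,\hat S)+\hat\sigma_{R-\hat R}(\tfrac t2,\tfrac\delta{2t},d,\hat R(\hat f,\hat S))\big)$, terminate returning $\hat f$ if $\epsilon$ was given and $\sigma_{\rm Active}<\epsilon$ (the ''$\epsilon$ condition''), set $G_t=\{f:\hat R(f,\hat S)\le\hat R(\hat f,\hat S)+\sigma_{\rm Active}\}$ and reset $\hat S=\emptyset$; otherwise $G_t=G_{t-1}$; if $m$ was given and $t=m$ terminate returning $\hat f$; increment $t$. For $G\subseteq\mathcal{F}$, $\mathcal{P}(G)$ is the distribution of $(X,Y')$ with $(X,Y)\sim\mathcal{P}$, $Y'$ = common value of $G$ at $X$ if $X\in AGR(G)$ and $Y'=Y$ otherwise;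 $R_{\mathcal{P}(G)}(f)=\Pr[f(X)\ne Y']$. Event $\mathcal{K}$: for every $t=2^i$ reached and every $f\in\mathcal{F}$, with $\hat R(f)=\hat R(f,\hat S)$ for $\hat S$ at iteration $t$ before reset, $R_{\mathcal{P}(G_{t-1})}(f)\le\hat R(f)+\sigma_{R-\hat R}(\tfrac t2,\tfrac\delta{2t},d,R_{\mathcal{P}(G_{t-1})}(f),\hat R(f))$ and $\hat R(f)\le R_{\mathcal{P}(G_{t-1})}(f)+\sigma_{\hat R-R}(\tfrac t2,\tfrac\delta{2t},d,R_{\mathcal{P}(G_{t-1})}(f),\hat R(f))$. *)

From HB Require Import structures.
From Stdlib Require Import ClassicalEpsilon.
From mathcomp Require Import all_boot all_order all_algebra.
From mathcomp Require Import all_classical all_reals all_analysis.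
Set Implicit Arguments. Unset Strict Implicit. Unset Printing Implicit Defensive.
Import Order.TTheory GRing.Theory Num.Theory.
Local Open Scope classical_set_scope.
Local Open Scope ring_scope.

(* Labels {+1,-1} are represented by bool (true = +1, false = -1). *)

Definition shatters {X : Type} (F : set (X -> bool)) (A : list X) : Prop :=
  List.NoDup A /\
  forall b : X -> bool, exists2 f, F f & forall x, List.In x A -> f x = b x.

Definition VCdim {X : Type} (F : set (X -> bool)) (d : nat) : Prop :=
  (exists A, length A = d /\ shatters F A) /\
  (forall A, shatters F A -> (length A <= d)%N).

Section Slacks.
Variable R : realType.

Definition Aterm (n delta' : R) (d : nat) : R :=
  4 * d%:R * ln (16 * n * expR 1 / (d%:R * delta')).

Definition sig_hat_RmR (n delta' : R) (d : nat) (rh : R) : R :=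
  Aterm n delta' d / n + Num.sqrt (Aterm n delta' d / n * rh).
Definition sig_bar_RmR (n delta' : R) (d : nat) (r : R) : R :=
  Num.sqrt (Aterm n delta' d / n * r).
Definition sig_bar_hRmR (n delta' : R) (d : nat) (r : R) : R :=
  Aterm n delta' d / n + Num.sqrt (Aterm n delta' d / n * r).
Definition sig_hat_hRmR (n delta' : R) (d : nat) (rh : R) : R :=
  Num.sqrt (Aterm n delta' d / n * rh).

Definition sigma_RmR (n delta' : R) (d : nat) (r rh : R) : R :=
  Num.min (sig_hat_RmR n delta' d rh) (sig_bar_RmR n delta' d r).
Definition sigma_hRmR (n delta' : R) (d : nat) (r rh : R) : R :=
  Num.min (sig_bar_hRmR n delta' d r) (sig_hat_hRmR n delta' d rh).

Definition sigma_active (n delta' : R) (d : nat) (rh : R) : R :=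
  sig_hat_RmR n delta' d rh +
  sig_bar_hRmR n delta' d (rh + sig_hat_RmR n delta' d rh).
End Slacks.

Section Risks.
Variable R : realType.
Variable X : Type.

Definition emp_risk (f : X -> bool) (S : seq (X * bool)) : R :=
  (count (fun z => f z.1 != z.2) S)%:R / (size S)%:R.

Definition AGR (G : set (X -> bool)) : set X :=
  [set x | forall f g, G f -> G g -> f x = g x].

(* "f(x) for any f in G": a chosen element of G (arbitrary if G is empty) *)
Definition pickG (G : set (X -> bool)) : X -> bool :=
  epsilon (inhabits (fun _ => true)) (fun f => G f).

(* label used by P(G) and by the algorithm on agreement points *)
Definition relabel (G : set (X -> bool)) (x : X) (y : bool) : bool :=
  if `[< AGR G x >] then pickG G x else y.
End Risks.

Section Prob.
Variable R : realType.
Variable dX : measure_display.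
Variable X : measurableType dX.
Variable P : probability (X * bool)%type R.

Definition risk (f : X -> bool) : R :=
  fine (P [set z | f z.1 != z.2]).

Definition riskG (G : set (X -> bool)) (f : X -> bool) : R :=
  fine (P [set z | f z.1 != relabel G z.1 z.2]).
End Prob.

Definition is_pow2 (t : nat) : Prop := exists k, t = (2 ^ k)%N.

Section Run.
Variable R : realType.
Variable X : Type.
Variables (F : set (X -> bool)) (d : nat) (delta : R).
Variable xs : nat -> X.
Variable ys : nat -> bool.   (* true labels y_1, y_2, ... (revealed only when requested) *)
Variable erm : nat -> seq (X * bool) -> (X -> bool).

Record state := St {
  stG : set (X -> bool);
  stS : seq (X * bool);         (* S-hat after iteration t (after possible reset) *)
  stSpre : seq (X * bool);      (* S-hat at iteration t before reset *)
  stf : X -> bool;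
  stsig : R                     (* sigma_Active computed at iteration t (if t = 2^i) *)
}.

Definition step (t : nat) (s : state) : state :=
  let x := xs t in
  let y := relabel (stG s) x (ys t) in
  let S' := rcons (stS s) (x, y) in
  let fh := erm t S' in
  if `[< is_pow2 t >] then
    let sg := sigma_active (t%:R / 2) (delta / (2 * t%:R)) d (emp_risk R fh S') in
    St [set f | F f /\ emp_risk R f S' <= emp_risk R fh S' + sg] [::] S' fh sg
  else St (stG s) S' S' fh 0.

(* run t = state after iteration t; run 0 = initialization (G_0 = F) *)
Fixpoint run (t : nat) : state :=
  match t with
  | 0 => St F [::] [::] (fun _ => true) 0
  | t'.+1 => step t'.+1 (run t')
  end.
End Run.

From HB Require Import structures.
From Stdlib Require Import ClassicalEpsilon.
From mathcomp Require Import all_boot all_order all_algebra.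
From mathcomp Require Import all_classical all_reals all_analysis.
From mathcomp Require Import lra.
Import Order.TTheory GRing.Theory Num.Theory.
Local Open Scope classical_set_scope.
Local Open Scope ring_scope.

(* Replacing the labels of P by the common vote of G on AGR(G) removes the same
   mass c = Pr[Y' <> Y] from the risk of every g in G and at most c from the risk
   of any other f, so the excess risk of f over a member of G under P is at most
   its excess risk under P(G).  At an epoch t = 2^i the bounds of K, combined with the ERM property
   of f-hat, give R_{P(G)}(f-hat) <= R_{P(G)}(f* ) + sigma_Active and show that
   f* passes the threshold defining G_t; by induction f* stays in every G_t, and
   at the terminating epoch R_P(f-hat) <= R_P(f* ) + sigma_Active < R_P(f* ) + eps. *)

Section Slacks.
Context {R : realType} {n dl : R} {d : nat}.

Lemma sigma_RmR_le_hat r rh : sigma_RmR n dl d r rh <= sig_hat_RmR n dl d rh.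
Proof. by rewrite /sigma_RmR ge_min lexx. Qed.

Lemma sigma_hRmR_le_bar r rh : sigma_hRmR n dl d r rh <= sig_bar_hRmR n dl d r.
Proof. by rewrite /sigma_hRmR ge_min lexx. Qed.

Lemma sig_bar_hRmR_le r r' : 0 <= r -> r <= r' ->
  sig_bar_hRmR n dl d r <= sig_bar_hRmR n dl d r'.
Proof.
move=> r_ge0 rr'; rewrite /sig_bar_hRmR lerD2l.
set a := Aterm n dl d / n; have [a_ge0|a_lt0] := leP 0 a.
  by apply: ler_wsqrtr; apply: ler_wpM2l.
by rewrite ler0_sqrtr ?sqrtr_ge0 //; nra.
Qed.

Context {rGh rGs eh es : R}.
Hypotheses (rGs_ge0 : 0 <= rGs) (rGs_le_rGh : rGs <= rGh) (eh_le_es : eh <= es).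
Hypothesis upper_h : rGh <= eh + sigma_RmR n dl d rGh eh.
Hypothesis lower_s : es <= rGs + sigma_hRmR n dl d rGs es.

Let rGh_le : rGh <= eh + sig_hat_RmR n dl d eh.
Proof. by apply: le_trans upper_h _; rewrite lerD2l sigma_RmR_le_hat. Qed.

Let es_le : es <= rGs + sig_bar_hRmR n dl d rGs.
Proof. by apply: le_trans lower_s _; rewrite lerD2l sigma_hRmR_le_bar. Qed.

Let sig_bar_rGs_le :
  sig_bar_hRmR n dl d rGs <= sig_bar_hRmR n dl d (eh + sig_hat_RmR n dl d eh).
Proof. exact/sig_bar_hRmR_le/(le_trans rGs_le_rGh). Qed.

Lemma riskG_gap_le_sigma_active : rGh <= rGs + sigma_active n dl d eh.
Proof.
by move: eh_le_es rGh_le es_le sig_bar_rGs_le; rewrite /sigma_active; lra.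
Qed.

Lemma emp_gap_le_sigma_active : es <= eh + sigma_active n dl d eh.
Proof.
by move: rGs_le_rGh rGh_le es_le sig_bar_rGs_le; rewrite /sigma_active; lra.
Qed.

End Slacks.

Section Disagreement.
Context {R : realType} {dT : measure_display} {T : measurableType dT}.
Variable mu : probability T R.
Implicit Types a b c : T -> bool.

Definition disagree a b : R := fine (mu [set z | a z != b z]).

Lemma measurable_neqb a b : measurable_fun setT a -> measurable_fun setT b ->
  measurable [set z | a z != b z].
Proof.
move=> ma mb; rewrite -[X in measurable X]setTI.
apply: (eq_measurable_fun (fun z => (a z && ~~ b z) || (~~ a z && b z))) => //.
  by move=> z _; case: (a z); case: (b z).
by apply: measurable_or; apply: measurable_and => //; apply: measurable_neg.
Qed.

Arguments measurable_neqb {a b}.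

Context {a b c : T -> bool}.
Hypotheses (ma : measurable_fun setT a) (mb : measurable_fun setT b)
  (mc : measurable_fun setT c).

Let fin_num_neqb (x y : T -> bool) : measurable_fun setT x -> measurable_fun setT y ->
  mu [set z | x z != y z] \is a fin_num.
Proof. by move=> mx my; apply/fin_num_measure/measurable_neqb. Qed.

Lemma disagree_triangle : disagree a c <= disagree a b + disagree b c.
Proof.
rewrite /disagree -fineD ?fin_num_neqb //; apply: fine_le; rewrite ?fin_numD ?fin_num_neqb //.
apply: le_trans (measureU2 mu (measurable_neqb ma mb) (measurable_neqb mb mc)).
apply: le_measure; rewrite ?inE.
- exact: measurable_neqb.
- by apply: measurableU; apply: measurable_neqb.
- move=> z /=; case: (a z); case: (b z); case: (c z); by [left|right].
Qed.

Lemma disagree_split : (forall z, b z != c z -> a z = b z) ->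
  disagree a c = disagree a b + disagree b c.
Proof.
move=> abc; have ac_split z : (a z != c z) = (a z != b z) || (b z != c z).
  by move: (abc z); case: (a z); case: (b z); case: (c z) => // /(_ isT).
have ac_disj z : ~~ ((a z != b z) && (b z != c z)).
  by move: (abc z); case: (a z); case: (b z); case: (c z) => // /(_ isT).
rewrite /disagree -fineD ?fin_num_neqb //; congr fine.
rewrite -measureU; try exact: measurable_neqb.
- congr (mu _); apply/funext => z; apply/propext.
  by rewrite /setU /= ac_split; split=> /orP.
- by apply/seteqP; split=> z // [] /= ab bc; move: (ac_disj z); rewrite ab bc.
Qed.

End Disagreement.

Section Relabel.
Context {X : Type} (G : set (X -> bool)).

Lemma pickG_mem g : G g -> G (pickG G).
Proof. by move=> Gg; apply: epsilon_spec; exists g. Qed.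

Lemma relabel_neqE g x y : G g -> relabel G x y != y -> relabel G x y = g x.
Proof.
rewrite /relabel => Gg; case: asboolP => [agrx _|_]; last by rewrite eqxx.
exact: agrx (pickG_mem _ Gg) Gg.
Qed.

End Relabel.

Arguments pickG_mem {X G g}.
Arguments relabel_neqE {X G g x y}.

Lemma measurable_relabel {dX : measure_display} {X : measurableType dX}
    (G : set (X -> bool)) :
  measurable (AGR G) -> measurable_fun setT (pickG G) ->
  measurable_fun setT (fun z : X * bool => relabel G z.1 z.2).
Proof.
move=> mAGR mpick; apply: measurable_fun_ifT.
- apply: (measurable_fun_bool true); rewrite setTI.
  rewrite (_ : _ @^-1` _ = AGR G `*` setT); first exact: measurableX.
  by apply/seteqP; split=> z /= => [/asboolP|[/asboolP]].
- exact: (measurableT_comp mpick measurable_fst).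
- exact: measurable_snd.
Qed.

Lemma risk_excess_le_riskG_excess {R : realType} {dX : measure_display}
    {X : measurableType dX} (P : probability (X * bool)%type R)
    (G : set (X -> bool)) (f g : X -> bool) :
  measurable (AGR G) -> (forall h, G h -> measurable_fun setT h) ->
  measurable_fun setT f -> G g ->
  risk P f - risk P g <= riskG P G f - riskG P G g.
Proof.
move=> mAGR mG mf Gg.
have my' := measurable_relabel G mAGR (mG _ (pickG_mem Gg)).
have mfst (h : X -> bool) :
    measurable_fun setT h -> measurable_fun setT (fun z : X * bool => h z.1).
  by move=> mh; exact: (measurableT_comp mh measurable_fst).
have := disagree_triangle P (mfst _ mf) my' measurable_snd.
have := disagree_split P (mfst _ (mG _ Gg)) my' measurable_snd
  (fun z => esym \o relabel_neqE Gg).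
rewrite /disagree /risk /riskG /=; lra.
Qed.

Section RunShape.
Context {R : realType} {X : Type} {F : set (X -> bool)} {d : nat} {delta : R}.
Context {xs : nat -> X} {ys : nat -> bool} {erm : nat -> seq (X * bool) -> (X -> bool)}.
Local Notation run_t := (run F d delta xs ys erm).

Lemma run_G_sub t : stG (run_t t) `<=` F.
Proof.
elim: t => [|t IH] //=; rewrite /step.
by case: asboolP => _ //= f [].
Qed.

Lemma stG_run_pow2 t : is_pow2 t.+1 ->
  stG (run_t t.+1) = [set f | F f /\
    emp_risk R f (stSpre (run_t t.+1)) <=
    emp_risk R (stf (run_t t.+1)) (stSpre (run_t t.+1)) + stsig (run_t t.+1)].
Proof. by move=> t_pow2 /=; rewrite /step; case: asboolP. Qed.

Lemma stsig_run_pow2 t : is_pow2 t.+1 ->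
  stsig (run_t t.+1) = sigma_active (t.+1%:R / 2) (delta / (2 * t.+1%:R)) d
    (emp_risk R (stf (run_t t.+1)) (stSpre (run_t t.+1))).
Proof. by move=> t_pow2 /=; rewrite /step; case: asboolP. Qed.

Lemma stG_run_npow2 t : ~ is_pow2 t.+1 -> stG (run_t t.+1) = stG (run_t t).
Proof. by move=> t_npow2 /=; rewrite /step; case: asboolP. Qed.

End RunShape.

Section ActiveILESS.
Context {R : realType} {dX : measure_display} {X : measurableType dX}.
Context {P : probability (X * bool)%type R}.
Context {F : set (X -> bool)} {d : nat} {delta : R}.
Context {xs : nat -> X} {ys : nat -> bool} {erm : nat -> seq (X * bool) -> (X -> bool)}.
Context {T : nat} {fstar : X -> bool}.
Local Notation run_t := (run F d delta xs ys erm).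

Hypothesis HFmeas : forall f, F f -> measurable_fun setT f.
Hypothesis Herm : forall t, (0 < t <= T)%N ->
  F (stf (run_t t)) /\
  forall f, F f ->
    emp_risk R (stf (run_t t)) (stSpre (run_t t)) <= emp_risk R f (stSpre (run_t t)).
Hypothesis HAGRmeas : forall t, (t < T)%N -> measurable (AGR (stG (run_t t))).
Hypothesis HK : forall t, (0 < t <= T)%N -> is_pow2 t -> forall f, F f ->
  let G := stG (run_t t.-1) in
  let Rh := emp_risk R f (stSpre (run_t t)) in
  let n := t%:R / 2 in
  let dl := delta / (2 * t%:R) in
  riskG P G f <= Rh + sigma_RmR n dl d (riskG P G f) Rh /\
  Rh <= riskG P G f + sigma_hRmR n dl d (riskG P G f) Rh.
Hypothesis Hfstar : F fstar.
Hypothesis Hmin : forall f, F f -> risk P fstar <= risk P f.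

Section Epoch.
Variable t : nat.
Hypotheses (t_lt_T : (t < T)%N) (t_pow2 : is_pow2 t.+1).
Hypothesis fstar_in_G : stG (run_t t) fstar.

Let t_in_range : (0 < t.+1 <= T)%N := t_lt_T.

Let G : set (X -> bool) := stG (run_t t).
Let fh : X -> bool := stf (run_t t.+1).
Let S : seq (X * bool) := stSpre (run_t t.+1).

Let Fh : F fh. Proof. exact: (Herm _ t_in_range).1. Qed.

Let riskG_fstar_ge0 : 0 <= riskG P G fstar.
Proof. exact/fine_ge0/measure_ge0. Qed.

Let risk_excess_le :
  risk P fh - risk P fstar <= riskG P G fh - riskG P G fstar.
Proof.
exact: risk_excess_le_riskG_excess (HAGRmeas _ t_lt_T)
  (fun h Gh => HFmeas h (run_G_sub t h Gh)) (HFmeas _ Fh) fstar_in_G.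
Qed.

Let riskG_fstar_le : riskG P G fstar <= riskG P G fh.
Proof. by move: risk_excess_le (Hmin _ Fh); lra. Qed.

Let emp_fh_le : emp_risk R fh S <= emp_risk R fstar S.
Proof. exact: (Herm _ t_in_range).2 _ Hfstar. Qed.

Let riskG_fh_le : riskG P G fh <= riskG P G fstar + stsig (run_t t.+1).
Proof.
rewrite stsig_run_pow2 //.
exact: riskG_gap_le_sigma_active riskG_fstar_ge0 riskG_fstar_le emp_fh_le
  (HK _ t_in_range t_pow2 _ Fh).1 (HK _ t_in_range t_pow2 _ Hfstar).2.
Qed.

Lemma epoch_risk_le : risk P fh <= risk P fstar + stsig (run_t t.+1).
Proof. by move: risk_excess_le riskG_fh_le; lra. Qed.

Lemma epoch_fstar_mem : stG (run_t t.+1) fstar.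
Proof.
rewrite stG_run_pow2 //; split=> //; rewrite stsig_run_pow2 //.
exact: emp_gap_le_sigma_active riskG_fstar_ge0 riskG_fstar_le
  (HK _ t_in_range t_pow2 _ Fh).1 (HK _ t_in_range t_pow2 _ Hfstar).2.
Qed.

End Epoch.

Lemma fstar_mem_run t : (t < T)%N -> stG (run_t t) fstar.
Proof.
elim: t => [|t IH] t_lt_T //; have fstar_in_G := IH (ltnW t_lt_T).
have [t_pow2|t_npow2] := pselect (is_pow2 t.+1).
  exact: epoch_fstar_mem _ (ltnW t_lt_T) t_pow2 fstar_in_G.
by rewrite stG_run_npow2.
Qed.

Lemma risk_erm_le : is_pow2 T ->
  risk P (stf (run_t T)) <= risk P fstar + stsig (run_t T).
Proof.
case=> k T_pow2; have T_gt0 : (0 < T)%N by rewrite T_pow2 expn_gt0.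
have T1_lt_T : (T.-1 < T)%N by rewrite ltn_predL.
rewrite -(prednK T_gt0) in T_pow2 *.
apply: epoch_risk_le _ T1_lt_T _ (fstar_mem_run _ T1_lt_T).
by exists k.
Qed.

End ActiveILESS.

Theorem lemma12 (R : realType) (dX : measure_display) (X : measurableType dX)
  (P : probability (X * bool)%type R)
  (F : set (X -> bool)) (d : nat)
  (HFmeas : forall f, F f -> measurable_fun setT f)
  (Hvc : VCdim F d)
  (eps delta : R) (Heps : 0 < eps) (Hdelta : 0 < delta < 1)
  (m : option nat)
  (xs : nat -> X) (ys : nat -> bool)
  (erm : nat -> seq (X * bool) -> (X -> bool))
  (T : nat)
  (* f-hat is an ERM over F on S-hat at every iteration up to termination *)
  (Herm : forall t, (0 < t <= T)%N ->
     F (stf (run F d delta xs ys erm t)) /\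
     forall f, F f ->
       emp_risk R (stf (run F d delta xs ys erm t)) (stSpre (run F d delta xs ys erm t))
       <= emp_risk R f (stSpre (run F d delta xs ys erm t)))
  (* measurability of the agreement regions of the G_t used *)
  (HAGRmeas : forall t, (t < T)%N -> measurable (AGR (stG (run F d delta xs ys erm t))))
  (* the run terminated at iteration T because of the epsilon condition *)
  (HTpow : is_pow2 T)
  (HTeps : stsig (run F d delta xs ys erm T) < eps)
  (HTfirst : forall t, (0 < t < T)%N -> is_pow2 t ->
     eps <= stsig (run F d delta xs ys erm t))
  (HTbudget : forall mm, m = Some mm -> (T <= mm)%N)
  (* event K *)
  (HK : forall t, (0 < t <= T)%N -> is_pow2 t -> forall f, F f ->
     let G := stG (run F d delta xs ys erm t.-1) in
     let Rh := emp_risk R f (stSpre (run F d delta xs ys erm t)) in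
     let n := t%:R / 2 in
     let dl := delta / (2 * t%:R) in
     riskG P G f <= Rh + sigma_RmR n dl d (riskG P G f) Rh /\
     Rh <= riskG P G f + sigma_hRmR n dl d (riskG P G f) Rh)
  (fstar : X -> bool) (Hfstar : F fstar)
  (Hmin : forall f, F f -> risk P fstar <= risk P f) :
  risk P (stf (run F d delta xs ys erm T)) <= risk P fstar + eps.
Proof.
apply: le_trans (risk_erm_le HFmeas Herm HAGRmeas HK Hfstar Hmin HTpow) _.
by rewrite lerD2l ltW.
Qed.
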